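(* Let $d=d(n)$ satisfy $12 \le d \le e^{\sqrt[3]{\log n}}$ and let $m = m(n,d) = \frac{\log n \,\log\log\log n}{\log d\, \log\log n}$. If $p=p(n) \ge 16520\, \frac{m\log(e\cdot 4130\, m)}{n}$, then for all sufficiently large $n$, the probability that $G(n,p)$ fails to satisfy property P2 is less than $e^{-2np}$, where P2 is the property: for every pair of disjoint vertex sets $A,B$ with $|A|,|B| \ge \frac{n}{4130m}$, there is at least one edge between $A$ and $B$.
   Context: $G(n,p)$ is the Erdős–Rényi random graph on vertex set of size $n$ in which each pair of vertices is an edge independently with probability $p$; $\log$ is the natural logarithm. *)

From HB Require Import structures.
From mathcomp Require Import all_boot all_order all_algebra.
From mathcomp Require Import all_classical all_reals all_analysis.
Set Implicit Arguments. Unset Strict Implicit. Unset Printing Implicit Defensive.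
Import Order.TTheory GRing.Theory Num.Theory.
Local Open Scope ring_scope.

Definition pairs (n : nat) : {set {set 'I_n}} := [set e : {set 'I_n} | #|e| == 2%N].

Definition is_graph (n : nat) (G : {set {set 'I_n}}) : bool := G \subset pairs n.

Definition gnp_weight (R : realType) (n : nat) (p : R) (G : {set {set 'I_n}}) : R :=
  p ^+ #|G| * (1 - p) ^+ (#|pairs n| - #|G|).

Definition gnp_prob (R : realType) (n : nat) (p : R)
    (Q : pred {set {set 'I_n}}) : R :=
  \sum_(G : {set {set 'I_n}} | is_graph G && Q G) gnp_weight p G.

Definition m_nd (R : realType) (n : nat) (d : R) : R :=
  (ln (n%:R : R) * ln (ln (ln (n%:R : R)))) / (ln d * ln (ln (n%:R : R))).

Definition P2 (R : realType) (n : nat) (m : R) (G : {set {set 'I_n}}) : Prop :=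
  forall A B : {set 'I_n}, [disjoint A & B] ->
    n%:R / (4130 * m) <= #|A|%:R -> n%:R / (4130 * m) <= #|B|%:R ->
    exists a b, [/\ a \in A, b \in B & [set a; b] \in G].

Definition P2b (R : realType) (n : nat) (m : R) : pred {set {set 'I_n}} :=
  fun G => `[< P2 m G >].

From HB Require Import structures.
From mathcomp Require Import all_boot all_order all_algebra.
From mathcomp Require Import all_classical all_reals all_analysis.
From mathcomp Require Import zify ring lra.
Import Order.TTheory GRing.Theory Num.Theory.
Local Open Scope ring_scope.

Set Implicit Arguments.
Unset Strict Implicit.
Unset Printing Implicit Defensive.

(* If P2 fails, shrinking a bad pair gives disjoint sets A, B of the same size
   k = ceil (n / (4130 m)) with no edge between them.  A union bound over all such
   pairs yields
     P(not P2) <= C(n,k)^2 (1-p)^(k^2) <= exp (2 k L - p k^2),   L = ln (e 4130 m),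
   since C(n,k) <= (e n / k)^k <= (e 4130 m)^k.  The hypothesis on p reads
   p n / (4130 m) >= 4 L, hence p k >= 4 L and 2 k L <= p k^2 / 2; and as d >= 12
   gives m <= ln n / ln 12, for large n we have k^2 > 4 n, so 2 n p < p k^2 / 2.
   The exponent is therefore below -2 n p.  The upper bound on d only serves to
   make m >= 1/3, i.e. L > 0. *)

Section SubsetSums.
Variable T : finType.

Lemma sum_subsets_binomial (R : comPzRingType) (U : {set T}) (x y : R) :
  \sum_(J : {set T} | J \subset U) x ^+ #|J| * y ^+ (#|U| - #|J|) = (x + y) ^+ #|U|.
Proof.
rewrite addrC exprDn (partition_big (fun J : {set T} => inord #|J| : 'I_#|U|.+1) xpredT) //=.
apply: eq_bigr => i _.
have cardJ (J : {set T}) : J \subset U -> (inord #|J| == i :> 'I_#|U|.+1) = (#|J| == i).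
  by move=> sJU; rewrite -val_eqE /= inordK // ltnS (subset_leq_card sJU).
rewrite (eq_bigl (fun J => J \in [set J : {set T} | J \subset U & #|J| == i])); last first.
  by move=> J; rewrite inE; case sJU: (J \subset U); rewrite //= cardJ.
rewrite (eq_bigr (fun _ => y ^+ (#|U| - i) * x ^+ i)); last first.
  by move=> J; rewrite inE => /andP[_ /eqP ->]; rewrite mulrC.
by rewrite sumr_const cards_draws.
Qed.

Lemma sum_subsets_disjoint (R : comPzRingType) (U E : {set T}) (x y : R) :
  E \subset U ->
  \sum_(J : {set T} | (J \subset U) && [disjoint E & J]) x ^+ #|J| * y ^+ (#|U| - #|J|)
    = (x + y) ^+ #|U :\: E| * y ^+ #|E|.
Proof.
move=> sEU.
rewrite (eq_bigl (fun J : {set T} => J \subset U :\: E)); last first.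
  by move=> J; rewrite subsetD disjoint_sym.
rewrite -sum_subsets_binomial mulr_suml; apply: eq_bigr => J sJ.
rewrite -mulrA -exprD; congr (_ * _ ^+ _).
have := subset_leq_card sJ; have := subset_leq_card sEU; rewrite cardsDS //; lia.
Qed.

Lemma ler_sum_cover (R : numDomainType) (I : finType) (P : pred I) (Q : pred T)
    (F : I -> pred T) (w : T -> R) :
  (forall t, 0 <= w t) -> (forall t, Q t -> exists2 i, P i & F i t) ->
  \sum_(t | Q t) w t <= \sum_(i | P i) \sum_(t | F i t) w t.
Proof.
move=> w0 cover.
rewrite (exchange_big_dep xpredT) //=.
rewrite [X in _ <= X](eq_bigr (fun t => #|[pred i | P i && F i t]|%:R * w t)); last first.
  by move=> t _; rewrite sumr_const mulr_natl.
rewrite [X in _ <= X](bigID Q) /= -[X in X <= _]addr0 lerD //; last first.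
  by apply: sumr_ge0 => t _; rewrite mulr_ge0.
apply: ler_sum => t /cover [i Pi Fit].
rewrite -[X in X <= _]mul1r ler_wpM2r // ler1n.
by apply/card_gt0P; exists i; rewrite inE Pi.
Qed.

Lemma exists_subset_card (A : {set T}) k :
  (k <= #|A|)%N -> exists2 B : {set T}, B \subset A & #|B| = k.
Proof.
rewrite -bin_gt0 -cards_draws card_gt0 => /finset.set0Pn[B].
by rewrite inE => /andP[sBA /eqP cB]; exists B.
Qed.

End SubsetSums.

Section RandomGraph.
Variables (R : realType) (n : nat) (p : R).
Hypotheses (p_ge0 : 0 <= p) (p_le1 : p <= 1).

Lemma gnp_weight_ge0 (G : {set {set 'I_n}}) : 0 <= gnp_weight p G.
Proof. by rewrite mulr_ge0 // exprn_ge0 // subr_ge0. Qed.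

Lemma gnp_prob_avoid (E : {set {set 'I_n}}) : E \subset pairs n ->
  gnp_prob p (fun G => [disjoint E & G]) = (1 - p) ^+ #|E|.
Proof.
by move=> sEK; rewrite /gnp_prob sum_subsets_disjoint // addrC subrK expr1n mul1r.
Qed.

Lemma gnp_prob_union_bound (I : finType) (P : pred I) (E : I -> {set {set 'I_n}})
    (Q : pred {set {set 'I_n}}) :
  (forall i, P i -> E i \subset pairs n) ->
  (forall G, is_graph G -> Q G -> exists2 i, P i & [disjoint E i & G]) ->
  gnp_prob p Q <= \sum_(i | P i) (1 - p) ^+ #|E i|.
Proof.
move=> sEK cover.
under eq_bigr => i Pi do rewrite -gnp_prob_avoid ?sEK //.
apply: ler_sum_cover => [G | G /andP[gG /(cover _ gG)[i Pi dEG]]].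
  exact: gnp_weight_ge0.
by exists i; rewrite ?gG.
Qed.

End RandomGraph.

Definition edges_between (n : nat) (A B : {set 'I_n}) : {set {set 'I_n}} :=
  [set [set x.1; x.2] | x in finset.setX A B].

Section EdgesBetween.
Variables (n : nat) (A B : {set 'I_n}).
Hypothesis dAB : [disjoint A & B].

Lemma edges_between_sub_pairs : edges_between A B \subset pairs n.
Proof.
apply/fintype.subsetP => _ /imsetP[[a b] /setXP[aA bB] ->].
have /negPf ab : a != b by apply: contraTneq bB => <-; rewrite (disjointFr dAB aA).
by rewrite inE cards2 /= ab.
Qed.

Lemma card_edges_between : #|edges_between A B| = (#|A| * #|B|)%N.
Proof.
rewrite card_in_imset ?cardsX // => -[a b] [a' b'] /setXP[/= aA bB] /setXP[/= aA' bB'] /= eq_ab.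
have AnB x : x \in A -> x \in B -> False by move=> xA; rewrite (disjointFr dAB xA).
have : a \in [set a'; b'] by rewrite -eq_ab set21.
have : b \in [set a'; b'] by rewrite -eq_ab set22.
rewrite !in_set2 => /orP[/eqP ba' | /eqP ->] /orP[/eqP -> | /eqP ab'] //.
1,2: by case: (AnB a' aA'); rewrite -ba'.
by case: (AnB a aA); rewrite ab'.
Qed.

End EdgesBetween.

Section P2Failure.
Variables (R : realType) (n : nat) (m : R) (k : nat).
Hypothesis k_least : forall j : nat, n%:R / (4130 * m) <= j%:R -> (k <= j)%N.

Definition balanced_pair (AB : {set 'I_n} * {set 'I_n}) : bool :=
  [&& #|AB.1| == k, #|AB.2| == k & [disjoint AB.1 & AB.2]].

Lemma not_P2_balanced_pair (G : {set {set 'I_n}}) : ~ P2 m G ->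
  exists2 AB, balanced_pair AB & [disjoint edges_between AB.1 AB.2 & G].
Proof.
move=> notP2; apply: contra_notP notP2 => noAB A B dAB leA leB.
have [A' sA'A cA'] := exists_subset_card (k_least leA).
have [B' sB'B cB'] := exists_subset_card (k_least leB).
have dA'B' : [disjoint A' & B'] := disjointW sA'A sB'B dAB.
have : edges_between A' B' :&: G != finset.set0.
  rewrite setI_eq0; apply/negP => dE; apply: noAB.
  by exists (A', B'); rewrite // /balanced_pair /= cA' cB' !eqxx.
case/finset.set0Pn => _ /setIP[/imsetP[[a b] /setXP[aA' bB'] ->] abG].
by exists a, b; split; rewrite // ?(fintype.subsetP sA'A) ?(fintype.subsetP sB'B).
Qed.

Lemma gnp_prob_not_P2_le (p : R) : 0 <= p -> p <= 1 ->
  @gnp_prob R n p (predC (P2b m)) <= ('C(n, k) ^ 2)%:R * (1 - p) ^+ (k * k).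
Proof.
move=> p0 p1.
apply: le_trans (gnp_prob_union_bound p0 p1 (P := balanced_pair)
  (E := fun AB => edges_between AB.1 AB.2) _ _) _.
- by move=> AB /and3P[_ _ /edges_between_sub_pairs].
- by move=> G _ /asboolPn /not_P2_balanced_pair.
rewrite (eq_bigr (fun _ => (1 - p) ^+ (k * k))); last first.
  by move=> AB /and3P[/eqP cA /eqP cB dAB]; rewrite card_edges_between // cA cB.
rewrite sumr_const -[X in X <= _]mulr_natl ler_wpM2r ?exprn_ge0 ?subr_ge0 // ler_nat.
rewrite -[X in 'C(X, k)](card_ord n) -card_draws -mulnn -cardsX.
apply/subset_leq_card/fintype.subsetP => -[A B].
by rewrite !inE => /and3P[-> -> _].
Qed.

End P2Failure.

Section RealBounds.
Variable R : realType.

Lemma bin_le_expR_pow (n k : nat) : (0 < k)%N ->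
  'C(n, k)%:R <= expR k%:R * (n%:R / k%:R) ^+ k :> R.
Proof.
move=> k0; have kR : (0 : R) < k%:R by rewrite ltr0n.
have [kn|nk] := leqP k n; last first.
  by rewrite bin_small // mulr_ge0 ?expR_ge0 // exprn_ge0 // divr_ge0.
have n0 : (0 : R) < n%:R by rewrite ltr0n (leq_trans k0).
set x : R := k%:R / n%:R; have x0 : 0 < x by rewrite divr_gt0.
have bin_term : 'C(n, k)%:R * x ^+ k <= (1 + x) ^+ n.
  rewrite mulr_natl exprDn (bigD1 (Ordinal (kn : (k < n.+1)%N))) //= expr1n mul1r.
  rewrite lerDl; apply: sumr_ge0 => i _.
  by rewrite mulrn_wge0 // mulr_ge0 // exprn_ge0 // ltW.
have exp_pow : (1 + x) ^+ n <= expR k%:R.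
  rewrite -[k%:R](divfK (lt0r_neq0 n0)) -/x mulrC expRM_natl.
  apply: lerXn2r; rewrite ?nnegrE ?expR_ge0 ?expR_ge1Dx //.
  by rewrite addr_ge0 // ltW.
rewrite -invf_div -/x exprVn ler_pdivlMr ?exprn_gt0 //.
exact: le_trans bin_term exp_pow.
Qed.

Lemma bin_le_expR_ln (n k : nat) (c : R) : (0 < k)%N -> 0 < c ->
  n%:R / k%:R <= c -> 'C(n, k)%:R <= expR (k%:R * ln (expR 1 * c)).
Proof.
move=> k0 c0 nkc; apply: le_trans (bin_le_expR_pow n k0) _.
rewrite expRM_natl lnK ?posrE ?mulr_gt0 ?expR_gt0 // [X in _ <= X]exprMn.
rewrite -expRM_natl mulr1.
apply: ler_wpM2l; first exact: expR_ge0.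
by apply: lerXn2r; rewrite // nnegrE ?divr_ge0 ?ler0n ?(ltW c0).
Qed.

Lemma expR_ge_cube (x : R) : 0 <= x -> (x / 3) ^+ 3 <= expR x.
Proof.
move=> x0; rewrite -[x in expR x](divfK (_ : 3 != 0)) // [_ * 3]mulrC expRM_natl.
apply: lerXn2r; rewrite ?nnegrE ?expR_ge0 ?divr_ge0 //.
by apply: le_trans (expR_ge1Dx _); rewrite lerDr.
Qed.

(* 108 = 4 * 27, to be compared with n = exp (ln n) >= (ln n / 3)^3. *)
Lemma sq_lt_natr (n : nat) (K m c : R) : 0 <= K -> 0 <= m -> 0 < c ->
  m * c <= ln n%:R -> 108 * K ^+ 2 < ln n%:R * c ^+ 2 -> 4 * (K * m) ^+ 2 < n%:R.
Proof.
move=> K0 m0 c0 mc hx; set x := ln (n%:R : R) in mc hx.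
have x0 : 0 < x.
  by rewrite -(pmulr_lgt0 _ (exprn_gt0 2 c0)); apply: le_lt_trans hx; rewrite mulr_ge0 ?sqr_ge0.
have n0 : 0 < n%:R :> R.
  by rewrite ltr0n lt0n; apply: contraTneq x0 => n0; rewrite /x n0 ln0 ?ltxx.
rewrite -(lnK (n0 : n%:R \is Num.pos)) -/x.
have mx : K * m <= K * (x / c) by rewrite ler_wpM2l // ler_pdivlMr.
apply: le_lt_trans (_ : _ <= 4 * (K * (x / c)) ^+ 2) _.
  apply: ler_wpM2l; first lra.
  have Km0 : 0 <= K * m := mulr_ge0 K0 m0.
  by rewrite lerXn2r // nnegrE (le_trans Km0 mx).
apply: lt_le_trans (expR_ge_cube (ltW x0)).
have cn0 := lt0r_neq0 c0.
have -> : 4 * (K * (x / c)) ^+ 2 = 108 * K ^+ 2 * (x ^+ 2 / (27 * c ^+ 2)) by field.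
have -> : (x / 3) ^+ 3 = x * c ^+ 2 * (x ^+ 2 / (27 * c ^+ 2)) by field.
by rewrite ltr_pM2r // divr_gt0 ?exprn_gt0 ?mulr_gt0.
Qed.

Lemma ln_gt_truncn_expR (K : R) (n : nat) :
  ((Num.truncn (expR K)).+1 <= n)%N -> K < ln n%:R.
Proof.
move=> hn; have Kn : expR K < n%:R.
  by apply: lt_le_trans (Num.Theory.truncnS_gt _) _; rewrite ler_nat.
by rewrite -[K]expRK ltr_ln ?posrE ?expR_gt0 ?(lt_trans (expR_gt0 K)).
Qed.

Lemma exists_least_nat_ge (t : R) : 0 <= t ->
  exists k : nat, t <= k%:R /\ forall j : nat, t <= j%:R -> (k <= j)%N.
Proof.
move=> t0; have c0 : 0 <= Num.ceil t by rewrite Num.Theory.ceil_ge0 (lt_le_trans _ t0) ?ltrN10.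
exists `|Num.ceil t|%N; split=> [|j tj].
  by rewrite natr_absz ger0_norm // Num.Theory.ceil_ge.
by rewrite -lez_nat abszE ger0_norm // Num.Theory.ceil_le_int.
Qed.

End RealBounds.

Section MBounds.
Variables (R : realType) (n : nat) (d : R).

Lemma m_nd_ge : expR (expR 1) <= ln (n%:R : R) -> 1 < d ->
  d <= expR (powR (ln (n%:R : R)) 3^-1) -> 3^-1 <= m_nd n d.
Proof.
move=> hx d1 hd; rewrite /m_nd.
set x := ln (n%:R : R) in hx hd *; set y := ln x; set z := ln y; set D := ln d.
have x0 : 0 < x := lt_le_trans (expR_gt0 _) hx.
have hy : expR 1 <= y by rewrite -[expR 1]expRK ler_ln ?posrE ?expR_gt0.
have y0 : 0 < y := lt_le_trans (expR_gt0 _) hy.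
have z1 : 1 <= z by rewrite -[1]expRK ler_ln ?posrE ?expR_gt0.
have D0 : 0 < D by rewrite ln_gt0.
set a := expR (3^-1 * y).
have hd' : d <= expR a by move: hd; rewrite /powR gt_eqF.
have Da : D <= a by rewrite /D -[a]expRK ler_ln ?posrE ?expR_gt0 ?(lt_trans ltr01 d1).
have := expR_ge1Dx (3^-1 * y); rewrite -/a => ya1.
have ya : y <= 3 * a by lra.
have a1 : 1 <= a by lra.
have a3 : a ^+ 3 = x by rewrite /a -expRM_natl mulrA mulfV ?mul1r ?lnK ?posrE.
rewrite ler_pdivlMr ?mulr_gt0 // -a3.
have : D * y <= a * (3 * a) by rewrite ler_pM // ltW.
nra.
Qed.

Lemma m_nd_le (c : R) : 1 < ln (n%:R : R) -> 1 < c -> c <= d ->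
  m_nd n d * ln c <= ln (n%:R : R).
Proof.
move=> hx c1 cd; rewrite /m_nd.
set x := ln (n%:R : R) in hx *; set y := ln x; set z := ln y; set D := ln d.
have y0 : 0 < y by rewrite ln_gt0.
have zy : z < y := ln_sublinear y0.
have c0 : 0 < ln c by rewrite ln_gt0.
have c0' : 0 < c := lt_trans ltr01 c1.
have cD : ln c <= D by rewrite ler_ln ?posrE ?(lt_le_trans c0' cd).
have D0 : 0 < D := lt_le_trans c0 cD.
rewrite mulrAC ler_pdivrMr ?mulr_gt0 // -mulrA ler_pM2l; last by lra.
nra.
Qed.

End MBounds.

Lemma gnp_prob_not_P2_lt (R : realType) (n : nat) (m p : R) :
  1 < expR 1 * 4130 * m -> 4 * (4130 * m) ^+ 2 < n%:R -> p <= 1 ->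
  16520 * (m * ln (expR 1 * 4130 * m)) / n%:R <= p ->
  @gnp_prob R n p (predC (P2b m)) < expR (- (2 * n%:R * p)).
Proof.
move=> hm hn p1 hp.
set L := ln (expR 1 * 4130 * m) in hp *; set t := n%:R / (4130 * m).
have e0 : 0 < expR 1 * 4130 :> R by have := expR_gt0 (1 : R); nra.
have m0 : 0 < m by rewrite -(pmulr_rgt0 _ e0) (lt_trans ltr01 hm).
have M0 : 0 < 4130 * m by lra.
have n0 : 0 < n%:R :> R by apply: le_lt_trans hn; nra.
have L0 : 0 < L by rewrite ln_gt0.
have t0 : 0 < t by rewrite divr_gt0.
have p0 : 0 < p by apply: lt_le_trans hp; apply: divr_gt0 _ n0; nra.
have tL : 4 * L <= p * t.
  have -> : 4 * L = 16520 * (m * L) / n%:R * t by rewrite /t; field; rewrite ?lt0r_neq0.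
  by apply: ler_wpM2r hp; apply: ltW.
have tn : 4 * n%:R < t * t.
  have -> : t * t = n%:R * n%:R / (4130 * m) ^+ 2 by rewrite /t; field; rewrite lt0r_neq0.
  by rewrite ltr_pdivlMr ?exprn_gt0 // mulrAC ltr_pM2r.
have [k [tk k_least]] := exists_least_nat_ge (ltW t0).
have kR : 0 < k%:R :> R := lt_le_trans t0 tk.
have bin_k : 'C(n, k)%:R <= expR (k%:R * L).
  rewrite /L -mulrA; apply: (bin_le_expR_ln _ M0); first by rewrite -(ltr0n R).
  by rewrite ler_pdivrMr // -ler_pdivrMl // mulrC.
have avoid_k : (1 - p) ^+ (k * k) <= expR ((k * k)%:R * - p).
  rewrite expRM_natl; apply: lerXn2r; last exact: expR_ge1Dx.
  - by rewrite nnegrE subr_ge0.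
  - by rewrite nnegrE expR_ge0.
apply: le_lt_trans (gnp_prob_not_P2_le k_least (ltW p0) p1) _.
apply: (@le_lt_trans _ _ (expR (k%:R * L) ^+ 2 * expR ((k * k)%:R * - p))).
  rewrite natrX; apply: ler_pM avoid_k.
  - exact/exprn_ge0/ler0n.
  - by rewrite exprn_ge0 ?subr_ge0.
  - by apply: lerXn2r; rewrite ?nnegrE ?expR_ge0 ?ler0n.
rewrite -expRM_natl -expRD ltr_expR natrM.
have kk : t * t <= k%:R * k%:R by rewrite ler_pM // ltW.
have Lk : 4 * L * k%:R <= p * k%:R * k%:R.
  apply: le_trans (ler_wpM2r (ltW kR) tL) _.
  by rewrite ler_wpM2r ?ler_wpM2l // ltW.
have nk : 4 * n%:R * p < p * (k%:R * k%:R).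
  by rewrite mulrC; apply: lt_le_trans (ler_wpM2l (ltW p0) kk); rewrite ltr_pM2l.
lra.
Qed.

Theorem lemma16 (R : realType) (d p : nat -> R) :
  (exists N : nat, forall n : nat, (N <= n)%N ->
     [/\ 12 <= d n, d n <= expR (powR (ln (n%:R : R)) (3^-1)),
         0 <= p n, p n <= 1 &
         p n >= 16520 * (m_nd n (d n) * ln (expR 1 * 4130 * m_nd n (d n))) / n%:R]) ->
  exists N : nat, forall n : nat, (N <= n)%N ->
    @gnp_prob R n (p n) (predC (P2b (m_nd n (d n)))) < expR (- (2 * n%:R * p n)).
Proof.
move=> [N0 HN]; set c : R := ln 12.
have lt1_12 : (1 : R) < 12 by lra.
have ge0_4130 : (0 : R) <= 4130 by lra.
have c0 : 0 < c := ln_gt0 lt1_12.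
exists (maxn N0 (maxn (Num.truncn (expR (expR (expR 1) : R))).+1
                      (Num.truncn (expR (108 * 4130 ^+ 2 / c ^+ 2))).+1)).
move=> n; rewrite !geq_max => /and3P[nN0 n_ee n_c].
have [d12 d_le _ p1 hp] := HN n nN0.
have x_ee : expR (expR 1) <= ln (n%:R : R) := ltW (ln_gt_truncn_expR n_ee).
have x1 : 1 < ln (n%:R : R) := lt_le_trans (pexpR_gt1 (expR_gt0 1)) x_ee.
have x_c : 108 * 4130 ^+ 2 < ln (n%:R : R) * c ^+ 2.
  by rewrite -ltr_pdivrMr ?exprn_gt0 //; apply: ln_gt_truncn_expR.
have m13 := m_nd_ge x_ee (lt_le_trans lt1_12 d12) d_le.
have mc := m_nd_le x1 lt1_12 d12.
apply: gnp_prob_not_P2_lt hp => //.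
  by clear -m13; have := expR_ge1Dx (1 : R); nra.
by apply: sq_lt_natr mc x_c => //; apply: le_trans m13; rewrite invr_ge0.
Qed.
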